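(* Let $W:\mathcal{X}\to\mathcal{Y}$ be a channel with $\mathcal{Y}$ finite, $n\in\mathbb{N}$, $0<\delta\le\sqrt{n}\log|\mathcal{Y}|$, and let $u_1,\dots,u_N\in\mathcal{X}^n$ satisfy $1-\frac12\|W_{u_j}-W_{u_k}\|_1\le 2^{-3\delta\sqrt{n}}$ for all $j\ne k$. Then there is a subset $\mathcal{C}\subset[N]$ with $|\mathcal{C}|\ge N/\lceil n\log|\mathcal{Y}|\rceil$ such that $\{(u_j,\mathcal{E}_j=\mathcal{T}^\delta_{u_j}):j\in\mathcal{C}\}$ is an $(n,|\mathcal{C}|,\lambda_1,\lambda_2)$-DI code with \[ \lambda_1=2\exp\!\left(-\delta^2/36K(|\mathcal{Y}|)\right),\qquad \lambda_2=2\exp\!\left(-\delta^2/36K(|\mathcal{Y}|)\right)+3\exp\!\left(-\delta\sqrt{n}\right). \]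
   Context: A channel $W:\mathcal{X}\to\mathcal{Y}$ ($\mathcal{X}$ a measurable space) is a measurable map $x\mapsto W_x\in\mathcal{P}(\mathcal{Y})$; $W_{x^n}(y^n)=\prod_{i=1}^nW_{x_i}(y_i)$. Logarithms and exponentials are base 2. $\|P-Q\|_1=\sum_y|P(y)-Q(y)|$; $H$ is Shannon entropy. The conditional typical set is $\mathcal{T}^\delta_{x^n}=\{y^n\in\mathcal{Y}^n:|\log W_{x^n}(y^n)+H(W_{x^n})|\le\delta\sqrt{n}\}$ and $K(d)=(\log\max\{d,3\})^2$. An $(n,M,\lambda_1,\lambda_2)$-DI code indexed by a set $\mathcal{C}$ of size $M$ is a family $\{(u_j,\mathcal{E}_j):j\in\mathcal{C}\}$, $u_j\in\mathcal{X}^n$, $\mathcal{E}_j\subset\mathcal{Y}^n$, with $W_{u_j}(\mathcal{E}_j)\ge1-\lambda_1$ for all $j$ and $W_{u_j}(\mathcal{E}_k)\le\lambda_2$ for all $j\ne k$. *)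

From HB Require Import structures.
From mathcomp Require Import all_boot all_order all_algebra.
From mathcomp Require Import all_classical all_reals all_analysis.
Set Implicit Arguments. Unset Strict Implicit. Unset Printing Implicit Defensive.
Import Order.TTheory GRing.Theory Num.Theory.
Local Open Scope ring_scope.

Section Defs.
Variable R : realType.

Definition log2 (x : R) : R := ln x / ln 2.
Definition exp2 (x : R) : R := 2 `^ x.

Definition is_dist (T : finType) (P : T -> R) : Prop :=
  (forall t, 0 <= P t) /\ \sum_(t : T) P t = 1.

Definition entropy (T : finType) (P : T -> R) : R :=
  - \sum_(t : T) (if P t == 0 then 0 else P t * log2 (P t)).

Definition l1dist (T : finType) (P Q : T -> R) : R :=
  \sum_(t : T) `|P t - Q t|.

Definition probE (T : finType) (P : T -> R) (E : {set T}) : R :=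
  \sum_(t in E) P t.

(* a channel W : X -> P(Y), X a measurable space, Y finite; measurability of
   x |-> W_x in P(Y) (subset of R^Y) means each coordinate is measurable *)
Definition channel (d : measure_display) (X : measurableType d) (Y : finType)
  (W : X -> Y -> R) : Prop :=
  (forall x, is_dist (W x)) /\ (forall y, measurable_fun setT (fun x => W x y)).

Definition prodW (X : Type) (Y : finType) (W : X -> Y -> R) (n : nat)
  (xn : 'I_n -> X) : {ffun 'I_n -> Y} -> R :=
  fun yn => \prod_(i < n) W (xn i) (yn i).

(* conditional typical set; log W = -oo (not typical) when W_{x^n}(y^n) = 0 *)
Definition typset (X : Type) (Y : finType) (W : X -> Y -> R) (n : nat)
  (delta : R) (xn : 'I_n -> X) : {set {ffun 'I_n -> Y}} :=
  [set yn | (0 < prodW W xn yn) &&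
            (`| log2 (prodW W xn yn) + entropy (prodW W xn) |
               <= delta * Num.sqrt (n%:R))].

Definition Kfun (dd : R) : R := (log2 (Num.max dd 3)) ^+ 2.

Definition DIcode (X : Type) (Y : finType) (W : X -> Y -> R) (n N : nat)
  (C : {set 'I_N}) (u : 'I_N -> 'I_n -> X) (E : 'I_N -> {set {ffun 'I_n -> Y}})
  (M : nat) (l1 l2 : R) : Prop :=
  #|C| = M /\
  (forall j, j \in C -> probE (prodW W (u j)) (E j) >= 1 - l1) /\
  (forall j k, j \in C -> k \in C -> j != k -> probE (prodW W (u j)) (E k) <= l2).

End Defs.

From HB Require Import structures.
From mathcomp Require Import all_boot all_order all_algebra.
From mathcomp Require Import all_classical all_reals all_analysis.
From mathcomp Require Import ring lra.
Import Order.TTheory GRing.Theory Num.Theory.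
Set Implicit Arguments.
Unset Strict Implicit.
Unset Printing Implicit Defensive.
Local Open Scope ring_scope.

(* Under W_{x^n} the surprisal -ln W_{x^n}(y^n) is a sum of n independent
   single-letter surprisals, each with moment generating function at most
   exp(s H + 10 s^2 ln^2 D) for |s| <= 1/(20 ln D), where D = max(|Y|, 3); a
   two-sided Chernoff bound then gives every codeword mass at least 1 - lambda_1
   on its own typical set.  If the output entropies of two codewords differ by
   at most one bit, their likelihoods agree up to the factor 2^(1 + 2 delta
   sqrt n) on the intersection of their typical sets, so the mass the first puts
   on the typical set of the second is at most its atypical mass plus
   2^(1 + 2 delta sqrt n) times the overlap sum_y min(W_{u_j}, W_{u_k})
   = 1 - |W_{u_j} - W_{u_k}|_1 / 2 <= 2^(-3 delta sqrt n).  Entropies lie in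
   [0, n log |Y|]; sorting the codewords into ceil(n log |Y|) bins of width one
   and keeping the largest bin gives the code. *)

Section ExpLnBounds.
Variable R : realType.
Implicit Types x t : R.

Lemma expRM1B_le1 x : expR x * (1 - x) <= 1.
Proof.
have := expR_ge1Dx (- x); have := expRxMexpNx_1 x; have := expR_gt0 x.
nra.
Qed.

Lemma expR_le1Dx_sqr x t : x <= t -> 0 <= t ->
  expR x <= 1 + x + x ^+ 2 * expR t.
Proof.
move=> xt t0.
have : x ^+ 2 * expR x <= x ^+ 2 * expR t.
  by rewrite ler_wpM2l ?sqr_ge0 ?ler_expR.
have := expRM1B_le1 x; have := expR_gt0 x; have := expR_ge1Dx x.
have := expR_ge1Dx t; case: (lerP x 0) => x0; nra.
Qed.

Lemma expR1_le3 : expR 1 <= 3 :> R.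
Proof.
have e6 : expR 1 = expR (6^-1 : R) ^+ 6 by rewrite -expRM_natl mulrV ?unitfE.
have le65 : expR (6^-1 : R) <= 6/5.
  by have := expRM1B_le1 (6^-1); have := expR_gt0 (6^-1 : R); nra.
rewrite e6; apply: le_trans (_ : (6/5) ^+ 6 <= 3).
  by rewrite lerXn2r ?nnegrE ?expR_ge0 //; lra.
by rewrite !exprS expr0; lra.
Qed.

Lemma ln_ge1 x : 3 <= x -> 1 <= ln x.
Proof.
move=> x3; have e3 := expR1_le3.
by rewrite -[X in X <= _](expRK 1) ler_ln ?posrE ?expR_gt0 //; lra.
Qed.

Lemma ln2_gt0 : 0 < ln 2 :> R.
Proof. by apply: ln_gt0; lra. Qed.

Lemma ln2_le : ln 2 <= 9/10 :> R.
Proof.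
have : 2 <= expR (9/10 : R).
  have -> : expR (9/10 : R) = expR (9/20) ^+ 2.
    by rewrite -expRM_natl; congr expR; lra.
  by have := expR_ge1Dx (9/20 : R); nra.
move=> h.
by rewrite -[X in _ <= X](expRK (9/10)) ler_ln ?posrE ?expR_gt0 //; lra.
Qed.

Lemma ln_le_subr1 x : 0 < x -> ln x <= x - 1.
Proof.
move=> x0; have := @le_ln1Dx R (x - 1).
by rewrite [1 + _]addrC subrK; apply; lra.
Qed.

Lemma sqr_mul_expRN_le x : 0 <= x -> x ^+ 2 * expR (- (9/20 * x)) <= 400/81.
Proof.
move=> x0; rewrite expRN ler_pdivrMr ?expR_gt0 //.
have -> : expR (9/20 * x) = (expR (9/40 * x - 1) * expR 1) ^+ 2.
  by rewrite -expRD -expRM_natl; congr expR; lra.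
have : 9/20 * x <= expR (9/40 * x - 1) * expR 1.
  have := expR_ge1Dx (9/40 * x - 1); have := expR_ge1Dx (1 : R).
  have := expR_gt0 (9/40 * x - 1); nra.
move=> /(lerXn2r 2); rewrite ?nnegrE ?mulr_ge0 ?expR_ge0 //.
by rewrite exprMn; lra.
Qed.

Lemma ln_prod (I : Type) (r : seq I) (P : pred I) (F : I -> R) :
  (forall i, P i -> 0 < F i) ->
  ln (\prod_(i <- r | P i) F i) = \sum_(i <- r | P i) ln (F i).
Proof.
move=> F0; elim: r => [|i r IH]; first by rewrite !big_nil ln1.
rewrite !big_cons; case: ifP => // Pi.
by rewrite lnM ?posrE ?IH ?F0 // prodr_gt0.
Qed.

End ExpLnBounds.

Section Surprisal.
Variables (R : realType) (T : finType).
Implicit Types p : T -> R.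

Definition surprisal p t := - ln (p t).

Definition entropy_nats p := \sum_t p t * surprisal p t.

Lemma log2E_surprisal p t : log2 (p t) = - surprisal p t / ln 2.
Proof. by rewrite /surprisal opprK. Qed.

Lemma entropyE p : entropy p = entropy_nats p / ln 2.
Proof.
rewrite /entropy /entropy_nats mulr_suml -sumrN; apply: eq_bigr => t _.
case: eqP => [->|_]; rewrite ?mul0r ?oppr0 //.
by rewrite log2E_surprisal mulNr mulrN opprK mulrA.
Qed.

Variable p : T -> R.
Hypothesis p_dist : is_dist p.
Let p_ge0 : forall t, 0 <= p t := p_dist.1.
Let p_sum1 : \sum_t p t = 1 := p_dist.2.

Lemma dist_le1 t : p t <= 1.
Proof. by rewrite -p_sum1 (bigD1 t) //= lerDl sumr_ge0. Qed.

Lemma surprisal_ge0 t : 0 <= surprisal p t.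
Proof. by rewrite oppr_ge0 ln_le0 // dist_le1. Qed.

Lemma entropy_nats_ge0 : 0 <= entropy_nats p.
Proof. by apply: sumr_ge0 => t _; rewrite mulr_ge0 ?surprisal_ge0. Qed.

Lemma dist_card_gt0 : (0 < #|T|)%N.
Proof.
have [t _|T0] := pickP (@predT T); first by apply/card_gt0P; exists t.
by move: p_sum1; rewrite big_pred0 // => /eqP; rewrite eq_sym oner_eq0.
Qed.

Lemma entropy_nats_le_ln_card : entropy_nats p <= ln #|T|%:R.
Proof.
have d0 : 0 < #|T|%:R :> R by rewrite ltr0n dist_card_gt0.
set d := #|T|%:R in d0 *.
have : \sum_t p t * (surprisal p t - ln d) <= \sum_t (d^-1 - p t).
  apply: ler_sum => t _; have := p_ge0 t; rewrite le0r => /predU1P[->|pt].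
    by rewrite mul0r subr0 invr_ge0 ltW.
  have -> : surprisal p t - ln d = ln ((p t * d)^-1).
    by rewrite lnV ?posrE ?mulr_gt0 // lnM ?posrE // opprD.
  have -> : d^-1 - p t = p t * ((p t * d)^-1 - 1).
    by field; rewrite !gt_eqF.
  by rewrite ler_pM2l //; apply: ln_le_subr1; rewrite invr_gt0 mulr_gt0.
under eq_bigr do rewrite mulrBr.
rewrite !sumrB -mulr_suml sumr_const p_sum1 -mulr_natr mulVf ?gt_eqF //.
by rewrite mul1r subrr subr_le0.
Qed.

Variable D : R.
Hypotheses (D_ge3 : 3 <= D) (card_le : #|T|%:R <= D).

(* For [s := surprisal p y] below [2 ln D], [expR (t * s) <= expR (1/10)];
   above it, [p y * expR (t * s) = expR ((t - 1) * s) <= expR (- 9/20 * s) / D],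
   which absorbs [s ^+ 2]. *)
Lemma surprisal_sqr_expR_le (t : R) y : 0 <= t -> 20 * t * ln D <= 1 ->
  p y * surprisal p y ^+ 2 * expR (t * surprisal p y)
    <= 40/9 * ln D ^+ 2 * p y + 400/81 / D.
Proof.
move=> t0 tL; have L1 := ln_ge1 D_ge3; have s0 := surprisal_ge0 y.
have D0 : 0 < D by have := D_ge3; lra.
have c0 : 0 <= 400/81 / D by apply: divr_ge0; lra.
set s := surprisal p y in s0 *.
have := p_ge0 y; rewrite le0r => /predU1P[->|py].
  by rewrite !mul0r mulr0 add0r.
have [sL|Ls] := lerP s (2 * ln D).
  have e : expR (t * s) <= 10/9.
    apply: le_trans (_ : expR (10^-1) <= _).
      by rewrite ler_expR; nra.
    by have := expRM1B_le1 (10^-1 : R); have := expR_gt0 (10^-1 : R); lra.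
  have : p y * s ^+ 2 * expR (t * s) <= p y * (4 * ln D ^+ 2) * (10/9).
    apply: ler_pM => //; first exact: mulr_ge0 (ltW py) (sqr_ge0 s).
    by rewrite ler_pM2l //; nra.
  lra.
have pE : p y = expR (- s) by rewrite /s /surprisal opprK lnK.
have : p y * s ^+ 2 * expR (t * s) <= s ^+ 2 * expR (- (9/20 * s)) / D.
  have -> : p y * s ^+ 2 * expR (t * s) = s ^+ 2 * (expR (- s) * expR (t * s)).
    by rewrite pE; ring.
  rewrite -mulrA -expRD; apply: ler_wpM2l; first exact: sqr_ge0.
  have -> : D^-1 = expR (- ln D) by rewrite expRN lnK // posrE.
  by rewrite -expRD ler_expR; nra.
have Di : 0 <= D^-1 by rewrite invr_ge0 ltW.
have := ler_wpM2r Di (sqr_mul_expRN_le s0).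
have : 0 <= 40/9 * ln D ^+ 2 * p y by rewrite !mulr_ge0 ?sqr_ge0 ?ltW //; lra.
lra.
Qed.

Lemma sum_surprisal_sqr_expR_le (t : R) : 0 <= t -> 20 * t * ln D <= 1 ->
  \sum_y p y * surprisal p y ^+ 2 * expR (t * surprisal p y) <= 10 * ln D ^+ 2.
Proof.
move=> t0 tL; have L1 := ln_ge1 D_ge3.
apply: le_trans (ler_sum _ (fun y _ => surprisal_sqr_expR_le y t0 tL)) _.
rewrite big_split /= -mulr_sumr p_sum1 mulr1.
rewrite sumr_const -[_ *+ #|_|]mulr_natr.
have D3 := D_ge3; have cT := card_le.
have : 400/81 / D * #|T|%:R <= 400/81 by rewrite mulrAC ler_pdivrMr; lra.
nra.
Qed.

Lemma sum_expR_surprisal_le (s : R) : 20 * `|s| * ln D <= 1 ->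
  \sum_y p y * expR (s * surprisal p y)
    <= expR (s * entropy_nats p + 10 * s ^+ 2 * ln D ^+ 2).
Proof.
move=> sL.
have term y : p y * expR (s * surprisal p y) <= p y + s * (p y * surprisal p y)
    + s ^+ 2 * (p y * surprisal p y ^+ 2 * expR (`|s| * surprisal p y)).
  have sy0 := surprisal_ge0 y.
  have := expR_le1Dx_sqr (ler_wpM2r sy0 (ler_norm s))
    (mulr_ge0 (normr_ge0 s) sy0).
  move=> /(ler_wpM2l (p_ge0 y)); congr (_ <= _); ring.
apply: le_trans (ler_sum _ (fun y _ => term y)) _.
rewrite !big_split /= -!mulr_sumr p_sum1; apply: le_trans (expR_ge1Dx _).
have := sum_surprisal_sqr_expR_le (normr_ge0 s) sL.
by move=> /(ler_wpM2l (sqr_ge0 s)); rewrite /entropy_nats; lra.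
Qed.

End Surprisal.

Section Exp2.
Variable R : realType.
Implicit Types x y : R.

Lemma exp2E x : exp2 x = expR (x * ln 2).
Proof. by rewrite /exp2 /powR pnatr_eq0. Qed.

Lemma exp2_ge0 x : 0 <= exp2 x.
Proof. exact: powR_ge0. Qed.

Lemma exp2D x y : exp2 (x + y) = exp2 x * exp2 y.
Proof. by rewrite !exp2E mulrDl expRD. Qed.

Lemma exp2_1 : exp2 1 = 2 :> R.
Proof. by rewrite /exp2 powRr1. Qed.

End Exp2.

Section Typical.
Variables (R : realType) (T : finType).
Implicit Types (P Q : T -> R) (A : {set T}).

Definition typical P (a : R) : {set T} :=
  [set t | (0 < P t) && (`|log2 (P t) + entropy P| <= a)].

Lemma in_typical P a t : (t \in typical P a) =
  (0 < P t) && (`|surprisal P t - entropy_nats P| <= a * ln 2).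
Proof.
have l2 := @ln2_gt0 R.
rewrite inE log2E_surprisal entropyE -mulrDl normrM normfV (gtr0_norm l2).
by rewrite ler_pdivrMr // addrC distrC.
Qed.

Lemma probE_setC P A : is_dist P -> probE P (~: A) = 1 - probE P A.
Proof.
case=> _ P1; rewrite /probE -P1 [\sum_t _](bigID (mem A)) /= addrC addrK.
by apply: eq_bigl => t; rewrite inE.
Qed.

Lemma sum_minr_dist P Q : is_dist P -> is_dist Q ->
  \sum_t Num.min (P t) (Q t) = 1 - l1dist P Q / 2.
Proof.
case=> _ P1 [_ Q1].
have minE t : Num.min (P t) (Q t) = (P t + Q t - `|P t - Q t|) / 2.
  by case: lerP => _; field.
rewrite (eq_bigr _ (fun t _ => minE t)) -mulr_suml sumrB big_split /= P1 Q1.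
by rewrite /l1dist; field.
Qed.

Lemma chernoff_two_sided P (Z : T -> R) (s c x : R) :
  (forall t, 0 <= P t) -> 0 < s ->
  \sum_t P t * expR (s * Z t) <= expR c ->
  \sum_t P t * expR (- s * Z t) <= expR c ->
  \sum_(t | x < `|Z t|) P t <= 2 * expR (c - s * x).
Proof.
move=> P0 s0 mgfP mgfN.
have tail t : (if x < `|Z t| then P t else 0)
    <= expR (- (s * x)) * (P t * expR (s * Z t))
       + expR (- (s * x)) * (P t * expR (- s * Z t)).
  have p0 := P0 t.
  have u0 : 0 <= expR (- (s * x)) * (P t * expR (s * Z t)).
    by rewrite !mulr_ge0 ?expR_ge0.
  have v0 : 0 <= expR (- (s * x)) * (P t * expR (- s * Z t)).
    by rewrite !mulr_ge0 ?expR_ge0.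
  case: ifP => [|_]; last by lra.
  rewrite ltr_normr => /orP[] xZ.
  - have : 1 <= expR (- (s * x)) * expR (s * Z t).
      by rewrite -expRD -expR0 ler_expR; nra.
    nra.
  - have : 1 <= expR (- (s * x)) * expR (- s * Z t).
      by rewrite -expRD -expR0 ler_expR; nra.
    nra.
rewrite big_mkcond /=; apply: le_trans (ler_sum _ (fun t _ => tail t)) _.
rewrite big_split /= -!mulr_sumr.
have e : expR (- (s * x)) * expR c = expR (c - s * x) by rewrite -expRD addrC.
have := ler_wpM2l (expR_ge0 (- (s * x))) mgfP.
have := ler_wpM2l (expR_ge0 (- (s * x))) mgfN.
lra.
Qed.

Lemma probE_typical_ge P a s c : is_dist P -> 0 < s ->
  \sum_t P t * expR (s * (surprisal P t - entropy_nats P)) <= expR c ->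
  \sum_t P t * expR (- s * (surprisal P t - entropy_nats P)) <= expR c ->
  1 - 2 * expR (c - s * (a * ln 2)) <= probE P (typical P a).
Proof.
move=> Pd s0 mgfP mgfN.
have := chernoff_two_sided (a * ln 2) Pd.1 s0 mgfP mgfN.
suff : probE P (~: typical P a)
    <= \sum_(t | a * ln 2 < `|surprisal P t - entropy_nats P|) P t.
  by rewrite probE_setC //; lra.
rewrite /probE big_mkcond [X in _ <= X]big_mkcond /=; apply: ler_sum => t _.
rewrite finset.in_setC in_typical negb_and -ltNge.
have := Pd.1 t; rewrite le0r => /predU1P[->|pt]; first by case: ifP; case: ifP.
by rewrite pt.
Qed.

Lemma typical_ratio_le P Q a t : t \in typical P a -> t \in typical Q a ->
  `|entropy P - entropy Q| <= 1 -> P t <= exp2 (1 + 2 * a) * Q t.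
Proof.
rewrite !inE => /andP[P0 hP] /andP[Q0 hQ] hH; have l2 := @ln2_gt0 R.
have : log2 (P t) - log2 (Q t) <= 1 + 2 * a.
  move: hP hQ hH; rewrite !ler_norml => /andP[? ?] /andP[? ?] /andP[? ?].
  lra.
rewrite /log2 -mulrBl ler_pdivrMr // => h.
have pP : P t \in Num.pos by rewrite posrE.
have pQ : Q t \in Num.pos by rewrite posrE.
by rewrite exp2E -(lnK pP) -(lnK pQ) -expRD ler_expR; lra.
Qed.

Lemma probE_typical_cross P Q a : is_dist P -> is_dist Q -> 0 <= a ->
  `|entropy P - entropy Q| <= 1 -> 1 - l1dist P Q / 2 <= exp2 (- (3 * a)) ->
  probE P (typical Q a) <= 1 - probE P (typical P a) + 2 * exp2 (- a).
Proof.
move=> Pd Qd a0 hH overlap; have l2 := @ln2_gt0 R.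
set E := exp2 (1 + 2 * a).
have E1 : 1 <= E.
  by rewrite /E exp2E; have := expR_ge1Dx ((1 + 2 * a) * ln 2); nra.
have pointwise t : (if t \in typical Q a then P t else 0)
    <= E * Num.min (P t) (Q t) + (if t \in ~: typical P a then P t else 0).
  have P0 := Pd.1 t; have m0 : 0 <= E * Num.min (P t) (Q t).
    by rewrite mulr_ge0 ?le_min ?P0 ?Qd.1 //; lra.
  rewrite finset.in_setC.
  case: ifP => tQ; case: ifP => /= tP; rewrite ?addr0; try lra.
  rewrite minr_pMr ?le_min; last lra.
  have := typical_ratio_le (negbFE tP) tQ hH; rewrite -/E => PQ.
  by apply/andP; split; nra.
rewrite [probE P _]/probE big_mkcond /=.
apply: le_trans (ler_sum _ (fun t _ => pointwise t)) _.
rewrite big_split /= -mulr_sumr sum_minr_dist // -big_mkcond -/(probE P _).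
rewrite probE_setC //.
have : E * (1 - l1dist P Q / 2) <= 2 * exp2 (- a).
  have -> : 2 * exp2 (- a) = E * exp2 (- (3 * a)).
    by rewrite /E -exp2D -[X in X * _]exp2_1 -exp2D; congr exp2; ring.
  by rewrite ler_wpM2l //; lra.
lra.
Qed.

End Typical.

Section ProductChannel.
Variables (R : realType) (X : Type) (Y : finType) (W : X -> Y -> R).
Hypothesis W_dist : forall x, is_dist (W x).
Variables (n : nat) (xn : 'I_n -> X).

Lemma sum_prodW_prod (F : 'I_n -> Y -> R) :
  \sum_f prodW W xn f * \prod_i F i (f i) = \prod_i \sum_y W (xn i) y * F i y.
Proof.
by rewrite bigA_distr_bigA; apply: eq_bigr => f _; rewrite /prodW -big_split.
Qed.

Lemma prodW_dist : is_dist (prodW W xn).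
Proof.
split=> [f|]; first by apply: prodr_ge0 => i _; apply: (W_dist _).1.
have /= := sum_prodW_prod (fun _ _ => 1).
under eq_bigr do rewrite big1_eq mulr1.
move=> ->; apply: big1 => i _; under eq_bigr do rewrite mulr1.
exact: (W_dist _).2.
Qed.

Lemma sum_prodW_marginal (g : Y -> R) i :
  \sum_f prodW W xn f * g (f i) = \sum_y W (xn i) y * g y.
Proof.
pose F j y := if j == i then g y else 1.
have Fi f : \prod_j F j (f j) = g (f i).
  by rewrite (bigD1 i) //= /F eqxx big1 ?mulr1 // => j /negbTE ->.
under eq_bigr => f _ do rewrite -Fi.
rewrite sum_prodW_prod (bigD1 i) //= [X in _ * X]big1 ?mulr1 /F ?eqxx //.
move=> j /negbTE ->; under eq_bigr do rewrite mulr1.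
exact: (W_dist _).2.
Qed.

Lemma surprisal_prodW f : 0 < prodW W xn f ->
  surprisal (prodW W xn) f = \sum_i surprisal (W (xn i)) (f i).
Proof.
move=> Pf; have Wi i : 0 < W (xn i) (f i).
  rewrite lt0r (W_dist _).1 andbT; apply/eqP => W0.
  by move: Pf; rewrite /prodW (bigD1 i) //= W0 mul0r ltxx.
by rewrite /surprisal /prodW ln_prod // sumrN.
Qed.

Lemma prodW_mul_surprisal f : prodW W xn f * surprisal (prodW W xn) f
  = prodW W xn f * \sum_i surprisal (W (xn i)) (f i).
Proof.
have := prodW_dist.1 f; rewrite le0r => /predU1P[->|Pf].
  by rewrite !mul0r.
by rewrite surprisal_prodW.
Qed.

Lemma entropy_nats_prodW :
  entropy_nats (prodW W xn) = \sum_i entropy_nats (W (xn i)).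
Proof.
rewrite /entropy_nats (eq_bigr _ (fun f _ => prodW_mul_surprisal f)).
under eq_bigr do rewrite mulr_sumr.
by rewrite exchange_big; apply: eq_bigr => i _; rewrite sum_prodW_marginal.
Qed.

Lemma entropy_prodW_le :
  0 <= entropy (prodW W xn) <= n%:R * log2 #|Y|%:R.
Proof.
have l2 := @ln2_gt0 R; rewrite entropyE entropy_nats_prodW /log2 mulrA.
have Hi i : 0 <= entropy_nats (W (xn i)) <= ln #|Y|%:R.
  by rewrite entropy_nats_ge0 ?entropy_nats_le_ln_card.
apply/andP; split.
  by rewrite divr_ge0 ?sumr_ge0 ?ltW // => i _; case/andP: (Hi i).
rewrite ler_pM2r ?invr_gt0 //.
apply: le_trans (_ : \sum_(i < n) ln #|Y|%:R <= _).
  by apply: ler_sum => i _; case/andP: (Hi i).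
by rewrite sumr_const card_ord mulr_natl.
Qed.

Lemma sum_prodW_expR_surprisal (s : R) :
  \sum_f prodW W xn f * expR (s * \sum_i surprisal (W (xn i)) (f i))
    = \prod_i \sum_y W (xn i) y * expR (s * surprisal (W (xn i)) y).
Proof.
rewrite -sum_prodW_prod; apply: eq_bigr => f _.
by rewrite mulr_sumr expR_sum.
Qed.

Variable D : R.
Hypotheses (D_ge3 : 3 <= D) (card_le : #|Y|%:R <= D).

Lemma sum_prodW_expR_centered_le (s : R) : 20 * `|s| * ln D <= 1 ->
  \sum_f prodW W xn f
      * expR (s * (surprisal (prodW W xn) f - entropy_nats (prodW W xn)))
    <= expR (n%:R * (10 * s ^+ 2 * ln D ^+ 2)).
Proof.
move=> sL; set H := entropy_nats (prodW W xn).
have shift f : prodW W xn f * expR (s * (surprisal (prodW W xn) f - H))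
    = expR (- (s * H))
      * (prodW W xn f * expR (s * \sum_i surprisal (W (xn i)) (f i))).
  have := prodW_dist.1 f; rewrite le0r => /predU1P[->|Pf].
    by rewrite !mul0r mulr0.
  by rewrite surprisal_prodW // mulrCA -expRD; congr (_ * expR _); ring.
rewrite (eq_bigr _ (fun f _ => shift f)) -mulr_sumr sum_prodW_expR_surprisal.
have mgf i : 0 <= \sum_y W (xn i) y * expR (s * surprisal (W (xn i)) y)
    <= expR (s * entropy_nats (W (xn i)) + 10 * s ^+ 2 * ln D ^+ 2).
  rewrite sumr_ge0 => [|y _]; last by rewrite mulr_ge0 ?expR_ge0 ?(W_dist _).1.
  exact: sum_expR_surprisal_le.
apply: le_trans (_ : expR (- (s * H)) * \prod_i
    expR (s * entropy_nats (W (xn i)) + 10 * s ^+ 2 * ln D ^+ 2) <= _).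
  by rewrite ler_wpM2l ?expR_ge0 // ler_prod.
rewrite -expR_sum -expRD ler_expR big_split /= -mulr_sumr.
rewrite /H entropy_nats_prodW.
by rewrite sumr_const card_ord mulr_natl; lra.
Qed.

Lemma probE_typical_prodW_ge a : 0 < a * ln 2 <= n%:R * ln D ->
  1 - 2 * expR (- ((a * ln 2) ^+ 2 / (40 * n%:R * ln D ^+ 2)))
    <= probE (prodW W xn) (typical (prodW W xn) a).
Proof.
move=> /andP[]; set x := a * ln 2 => x0 xL; have L1 := ln_ge1 D_ge3.
have n0 : 0 < n%:R :> R by have := ler0n R n; nra.
(* [s] minimizes the Chernoff exponent
   [n * (10 * s ^+ 2 * ln D ^+ 2) - s * x]. *)
set s := x / (20 * n%:R * ln D ^+ 2).
have L0 : 0 < ln D ^+ 2 by apply: exprn_gt0; lra.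
have s0 : 0 < s by rewrite divr_gt0 // !mulr_gt0 //; lra.
have sL : 20 * `|s| * ln D <= 1.
  have -> : 20 * `|s| * ln D = x / (n%:R * ln D).
    by rewrite gtr0_norm // /s; field; rewrite !gt_eqF //; lra.
  by rewrite ler_pdivrMr ?mulr_gt0 //; lra.
have := sum_prodW_expR_centered_le (s := - s).
rewrite normrN sqrrN => /(_ sL) mgfN.
have := probE_typical_ge a prodW_dist s0 (sum_prodW_expR_centered_le sL) mgfN.
have -> // : n%:R * (10 * s ^+ 2 * ln D ^+ 2) - s * x
    = - (x ^+ 2 / (40 * n%:R * ln D ^+ 2)).
by rewrite /s; field; rewrite !gt_eqF //; lra.
Qed.

End ProductChannel.

Lemma exists_large_fiber (A B : finType) (g : A -> B) (b0 : B) :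
  exists b, (#|A| <= #|B| * #|[set a | g a == b]|)%N.
Proof.
pose fiber b := #|[set a | g a == b]|.
exists [arg max_(b > b0) fiber b]; case: arg_maxnP => // b _ bmax.
apply: (@leq_trans (\sum_(b' : B) fiber b')).
  rewrite -sum1_card (partition_big g xpredT) //=; apply/eq_leq/eq_bigr => b' _.
  by rewrite /fiber -sum1_card; apply: eq_bigl => a; rewrite inE.
apply: (@leq_trans (\sum_(b' : B) fiber b)).
  by apply: leq_sum => b' _; exact: bmax.
by rewrite sum_nat_const.
Qed.

Section Binning.
Variable R : realType.

Lemma exists_large_class_diam_le1 (N : nat) (h : 'I_N -> R) (M : R) :
  0 < M -> (forall j, 0 <= h j <= M) ->
  exists C : {set 'I_N}, N%:R / (Num.ceil M)%:~R <= (#|C|%:R : R)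
    /\ {in C &, forall j k, `|h j - h k| <= 1}.
Proof.
move=> M0 hM; have := ceil_ge M; have : 0 < Num.ceil M by rewrite ceil_gt0.
case: (Num.ceil M) => [[|K]|] // _; rewrite -pmulrn => MK.
pose bin j : 'I_K.+1 := inord (minn (Num.truncn (h j)) K).
have binP j : (bin j)%:R <= h j <= (bin j)%:R + 1.
  have /andP[h0 hle] := hM j; have /andP[tr_le lt_tr] := truncn_itv h0.
  rewrite inordK ?ltnS ?geq_minr //; case: leqP => [trK|Ktr].
    by rewrite tr_le natr1 ltW.
  by rewrite (le_trans _ tr_le) ?ler_nat 1?ltnW // natr1 (le_trans hle).
have [b] := exists_large_fiber bin ord0; rewrite !card_ord => bN.
exists [set j | bin j == b]; split.
  by rewrite ler_pdivrMr ?ltr0n // mulrC -natrM ler_nat.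
move=> j k; rewrite !inE => /eqP jb /eqP kb.
have := binP j; have := binP k; rewrite jb kb => /andP[? ?] /andP[? ?].
by rewrite ler_norml; apply/andP; split; lra.
Qed.

End Binning.

Section ChannelTypicalSets.
Variable R : realType.

Lemma typsetE (X : Type) (Y : finType) (W : X -> Y -> R) n delta
    (xn : 'I_n -> X) :
  typset W delta xn = typical (prodW W xn) (delta * Num.sqrt n%:R).
Proof. by []. Qed.

Lemma gt0_sqrt_mul_log2 (n : nat) (m : R) :
  0 < Num.sqrt n%:R * log2 m -> (0 < n)%N /\ 1 < m.
Proof.
move=> h; have l2 := @ln2_gt0 R; have sq0 := sqrtr_ge0 (n%:R : R).
have lg : 0 < log2 m.
  by rewrite ltNge; apply/negP => le0; have := mulr_ge0_le0 sq0 le0; lra.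
split.
  by rewrite lt0n; apply/negP => /eqP n0; move: h; rewrite n0 sqrtr0 mul0r ltxx.
have : 0 < ln m by move: lg; rewrite /log2 pmulr_lgt0 ?invr_gt0.
by move=> lm; rewrite ltNge; apply/negP => /ln_le0; lra.
Qed.

(* [Kfun] is measured in bits and the Chernoff exponent in nats; the conversion
   costs a factor [ln 2 <= 9/10 = 36/40]. *)
Lemma expR_le_exp2_Kfun (m delta : R) :
  expR (- ((delta * ln 2) ^+ 2 / (40 * ln (Num.max m 3) ^+ 2)))
    <= exp2 (- (delta ^+ 2 / (36 * Kfun m))).
Proof.
have L1 : 1 <= ln (Num.max m 3) by apply: ln_ge1; rewrite le_max lexx orbT.
have l2 := @ln2_gt0 R; have l29 := @ln2_le R.
rewrite exp2E ler_expR /Kfun /log2; set L := ln (Num.max m 3) in L1 *.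
set q := delta ^+ 2 * ln 2 ^+ 2 / L ^+ 2.
have q0 : 0 <= q by apply: divr_ge0; [apply: mulr_ge0|]; apply: sqr_ge0.
have -> : (delta * ln 2) ^+ 2 / (40 * L ^+ 2) = q / 40.
  by rewrite /q; field; lra.
have -> : delta ^+ 2 / (36 * (L / ln 2) ^+ 2) = q / 36.
  by rewrite /q; field; apply/andP; split; lra.
rewrite mulNr; nra.
Qed.

Lemma probE_typset_ge (X : Type) (Y : finType) (W : X -> Y -> R) n
    (xn : 'I_n -> X) (delta : R) :
  (forall x, is_dist (W x)) -> 0 < delta ->
  delta <= Num.sqrt n%:R * log2 #|Y|%:R ->
  1 - 2 * exp2 (- (delta ^+ 2 / (36 * Kfun #|Y|%:R)))
    <= probE (prodW W xn) (typset W delta xn).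
Proof.
move=> W_dist d0 dle; have [n0 Y1] := gt0_sqrt_mul_log2 (lt_le_trans d0 dle).
have l2 := @ln2_gt0 R; pose D : R := Num.max #|Y|%:R 3.
have D3 : 3 <= D by rewrite le_max lexx orbT.
have YD : #|Y|%:R <= D by rewrite le_max lexx.
have sn : 0 < Num.sqrt n%:R :> R by rewrite sqrtr_gt0 ltr0n.
have sn2 : Num.sqrt n%:R ^+ 2 = n%:R :> R by rewrite sqr_sqrtr.
have radius : 0 < delta * Num.sqrt n%:R * ln 2 <= n%:R * ln D.
  rewrite !mulr_gt0 //=.
  have : ln #|Y|%:R <= ln D by rewrite ler_ln ?posrE //; lra.
  have : delta * ln 2 <= Num.sqrt n%:R * ln #|Y|%:R.
    by move: dle; rewrite /log2 mulrA -ler_pdivlMr.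
  have := ln_ge1 D3; nra.
rewrite typsetE.
apply: le_trans (probE_typical_prodW_ge W_dist xn D3 YD radius).
have -> : (delta * Num.sqrt n%:R * ln 2) ^+ 2 / (40 * n%:R * ln D ^+ 2)
    = (delta * ln 2) ^+ 2 / (40 * ln D ^+ 2).
  rewrite !exprMn sn2; field; rewrite !gt_eqF ?ltr0n //; have := ln_ge1 D3; lra.
by have := expR_le_exp2_Kfun #|Y|%:R delta; lra.
Qed.

End ChannelTypicalSets.

Theorem theorem3 (R : realType) (d : measure_display) (X : measurableType d)
  (Y : finType) (W : X -> Y -> R) (n N : nat) (delta : R)
  (u : 'I_N -> 'I_n -> X) :
  channel W ->
  0 < delta -> delta <= Num.sqrt (n%:R) * log2 (#|Y|%:R : R) ->
  (forall j k : 'I_N, j != k ->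
     1 - l1dist (prodW W (u j)) (prodW W (u k)) / 2
       <= exp2 (- (3 * delta * Num.sqrt (n%:R)))) ->
  exists C : {set 'I_N},
    (N%:R / (Num.ceil (n%:R * log2 (#|Y|%:R : R)))%:~R <= (#|C|%:R : R)) /\
    DIcode W C u (fun j => typset W delta (u j)) #|C|
      (2 * exp2 (- (delta ^+ 2 / (36 * Kfun (#|Y|%:R : R)))))
      (2 * exp2 (- (delta ^+ 2 / (36 * Kfun (#|Y|%:R : R))))
       + 3 * exp2 (- (delta * Num.sqrt (n%:R)))).
Proof.
move=> [W_dist _] d0 dle overlap.
have [n0 Y1] := gt0_sqrt_mul_log2 (lt_le_trans d0 dle).
have lg : 0 < log2 (#|Y|%:R : R) by rewrite divr_gt0 ?ln2_gt0 ?ln_gt0.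
have M0 : 0 < n%:R * log2 (#|Y|%:R : R) by rewrite mulr_gt0 ?ltr0n.
have [C [CN Cdiam]] :=
  exists_large_class_diam_le1 M0 (fun j => entropy_prodW_le W_dist (u j)).
exists C; split => //; split => //; split => [j _|j k jC kC jk].
  exact: probE_typset_ge.
have a0 : 0 <= delta * Num.sqrt n%:R by rewrite mulr_ge0 ?sqrtr_ge0 ?ltW.
have := probE_typical_cross (prodW_dist W_dist (u j)) (prodW_dist W_dist (u k))
  a0 (Cdiam j k jC kC).
rewrite mulrA -!typsetE => /(_ (overlap j k jk)).
have := probE_typset_ge (u j) W_dist d0 dle.
have := exp2_ge0 (- (delta * Num.sqrt n%:R)).
lra.
Qed.
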